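(* Let $G=(V,E)$ be an undirected graph in which every vertex has degree at most $d$, let $\pi$ be a uniformly random ordering of $V$, and let $P$ be the $\delta$-prefix of $V$ with respect to $\pi$. If $\delta\le k/d$, then the expected number of vertices in $P$ incident to at least one internal edge of $P$ is $O(k|P|)$.
   Context: For $0<\delta\le1$, the $\delta$-prefix of $V$ with respect to $\pi$ is the set of the $\delta|V|$ earliest vertices in $\pi$. The internal edges of $P$ are the edges of $G$ with both endpoints in $P$. *)

From HB Require Import structures.
From mathcomp Require Import all_boot all_order all_algebra.
From mathcomp Require Import reals.
Set Implicit Arguments. Unset Strict Implicit. Unset Printing Implicit Defensive.
Import Order.TTheory GRing.Theory Num.Theory.
Local Open Scope ring_scope.

Definition simple_graph (V : finType) (e : rel V) : Prop :=
  symmetric e /\ irreflexive e.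

Definition max_degree_le (V : finType) (e : rel V) (d : nat) : Prop :=
  forall v : V, (#|[set u | e v u]| <= d)%N.

(* orderings of V: bijections V -> {0,..,|V|-1}; pi v is the position of v *)
Definition orderings (V : finType) : {set {ffun V -> 'I_#|V|}} :=
  [set f : {ffun V -> 'I_#|V|} | injectiveb f].

Definition prefix (V : finType) (pi : {ffun V -> 'I_#|V|}) (m : nat) : {set V} :=
  [set v | (pi v < m)%N].

Definition prefix_size (R : realType) (V : finType) (delta : R) : nat :=
  `|Num.floor (delta * #|V|%:R)|%N.

Definition internal_vertices (V : finType) (e : rel V) (P : {set V}) : {set V} :=
  [set v in P | [exists u in P, e v u]].

Definition expected_internal (R : realType) (V : finType) (e : rel V) (m : nat) : R :=
  (\sum_(pi in orderings V) (#|internal_vertices e (prefix pi m)|)%:R)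
    / (#|orderings V|)%:R.

(* Count ordered edges (v, u) with both endpoints in the prefix instead of
   vertices: every internal vertex is the tail of such an edge.  By symmetry
   of the uniform ordering, a fixed pair of distinct vertices lies in the
   m-prefix with probability m(m-1) / (n(n-1)), and there are at most n d
   ordered edges, so the expectation is at most d m (m-1) / (n-1) <= d m^2 / n.
   Since m <= delta n and delta d <= k, this is at most k m. *)

From Pilot Require Import Defs.
From mathcomp Require Import all_boot all_order all_algebra.
From mathcomp Require Import fingroup perm ring.
From mathcomp Require Import reals.
Import Order.TTheory GRing.Theory Num.Theory.
Set Implicit Arguments. Unset Strict Implicit. Unset Printing Implicit Defensive.

Section Orderings.

Variable V : finType.
Implicit Types (pi : {ffun V -> 'I_#|V|}) (m : nat) (p : V * V).

Lemma orderings_inj pi : pi \in orderings V -> injective pi.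
Proof. by rewrite inE => /injectiveP. Qed.

Lemma card_prefix pi m : pi \in orderings V -> m <= #|V| -> #|Defs.prefix pi m| = m.
Proof.
move=> /orderings_inj pi_inj le_mn.
have [g piK gK] : bijective pi by apply: inj_card_bij; rewrite ?card_ord.
have -> : Defs.prefix pi m = g @: [set i : 'I_#|V| | i < m].
  apply/setP => v; rewrite inE; apply/idP/imsetP => [v_m | [i]].
    by exists (pi v); rewrite ?inE ?piK.
  by rewrite inE => i_m ->; rewrite gK.
rewrite card_imset; last exact: can_inj gK.
by rewrite -sum1dep_card (big_ord_narrow le_mn) sum1_card card_ord.
Qed.

Lemma card_offdiag (A : {set V}) :
  #|[set p | [&& p.1 != p.2, p.1 \in A & p.2 \in A]]| = #|A| * (#|A| - 1).
Proof.
have diagA : [set (v, v) | v in A] \subset setX A A.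
  by apply/subsetP => _ /imsetP[v vA ->]; rewrite in_setX vA.
have -> : [set p | [&& p.1 != p.2, p.1 \in A & p.2 \in A]]
          = setX A A :\: [set (v, v) | v in A].
  apply/setP => -[v u]; rewrite !inE /=; apply/and3P/andP => [[vu vA uA] | [diag]].
    split; last by rewrite vA uA.
    by apply/imsetP => -[w _ [vw uw]]; rewrite vw uw eqxx in vu.
  case/andP=> vA uA; split=> //; apply: contraNneq diag => ->.
  by apply/imsetP; exists u.
rewrite cardsD (setIidPr diagA) cardsX card_imset; last by move=> v u [].
by rewrite mulnBr muln1.
Qed.

Definition pair_in_prefix m pi p := (pi p.1 < m) && (pi p.2 < m).

Definition pair_prefix_count m p :=
  #|[set pi in orderings V | pair_in_prefix m pi p]|.

Lemma sum_card_pairs_in_prefix m (Q : pred (V * V)) :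
  \sum_(pi in orderings V) #|[set p | Q p && pair_in_prefix m pi p]|
  = \sum_(p | Q p) pair_prefix_count m p.
Proof.
under eq_bigr do rewrite -sum1dep_card.
rewrite (exchange_big_dep Q) /=; last by move=> pi p _ /andP[].
apply: eq_bigr => p Qp; rewrite sum1dep_card.
by apply: eq_card => pi; rewrite !inE Qp.
Qed.

Lemma perm_pair_transitive (v u v' u' : V) : v != u -> v' != u' ->
  exists s : {perm V}, s v' = v /\ s u' = u.
Proof.
move=> vu vu'; set w := tperm v' v u'.
have wv : w != v.
  by apply: contra vu' => /eqP wv; rewrite -(tpermK v' v u') -/w wv tpermR.
exists (tperm v' v * tperm w u)%g; rewrite !permM tpermL -/w tpermL.
by rewrite tpermD // eq_sym.
Qed.

Lemma pair_prefix_count_le m p q : p.1 != p.2 -> q.1 != q.2 ->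
  pair_prefix_count m p <= pair_prefix_count m q.
Proof.
move=> p_ne q_ne; have [s [sq1 sq2]] := perm_pair_transitive p_ne q_ne.
pose relabel pi : {ffun V -> 'I_#|V|} := [ffun x => pi (s x)].
have relabel_inj : injective relabel.
  move=> pi1 pi2 /ffunP eq12; apply/ffunP => x.
  by have := eq12 (s^-1 x)%g; rewrite !ffunE permKV.
rewrite /pair_prefix_count -(card_imset _ relabel_inj); apply: subset_leq_card.
apply/subsetP => sigma /imsetP[pi]; rewrite !inE => /andP[/injectiveP pi_inj pi_p] ->.
rewrite /pair_in_prefix !ffunE sq1 sq2 -/(pair_in_prefix m pi p) pi_p andbT.
by apply/injectiveP => x y; rewrite !ffunE => /pi_inj /perm_inj.
Qed.

Lemma pair_prefix_count_eq m p : m <= #|V| -> p.1 != p.2 ->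
  pair_prefix_count m p * (#|V| * (#|V| - 1)) = #|orderings V| * (m * (m - 1)).
Proof.
move=> le_mn p_ne.
have uniform q : q.1 != q.2 -> pair_prefix_count m q = pair_prefix_count m p.
  by move=> q_ne; apply/eqP; rewrite eqn_leq !pair_prefix_count_le.
have card_offdiagT : #|[set q : V * V | q.1 != q.2]| = #|V| * (#|V| - 1).
  by rewrite -cardsT -card_offdiag; apply: eq_card => q; rewrite !inE !andbT.
rewrite -card_offdiagT mulnC -sum_nat_cond_const.
rewrite (eq_bigr (pair_prefix_count m)); last by move=> q /uniform.
rewrite -(sum_card_pairs_in_prefix m (fun q => q.1 != q.2)).
rewrite -sum_nat_const; apply: eq_bigr => pi pi_ord.
rewrite -[in RHS](card_prefix pi_ord le_mn) -card_offdiag.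
by apply: eq_card => q; rewrite !inE.
Qed.

End Orderings.

Section InternalVertices.

Variables (V : finType) (e : rel V).
Hypothesis e_simple : simple_graph e.

Lemma internal_vertices_trivial (P : {set V}) : #|V| <= 1 -> internal_vertices e P = set0.
Proof.
case: e_simple => _ e_irr /fintype_le1P all_eq; apply/setP => v; rewrite !inE.
by apply/andP => -[_ /existsP[u /andP[_]]]; rewrite (all_eq v u) e_irr.
Qed.

Lemma card_internal_prefix_le (pi : {ffun V -> 'I_#|V|}) m :
  #|internal_vertices e (Defs.prefix pi m)|
  <= #|[set p : V * V | e p.1 p.2 && pair_in_prefix m pi p]|.
Proof.
apply: leq_trans (leq_imset_card fst _); apply: subset_leq_card.
apply/subsetP => v; rewrite !inE => /andP[v_m /existsP[u]].
rewrite !inE => /andP[u_m evu]; apply/imsetP; exists (v, u) => //.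
by rewrite !inE /pair_in_prefix /= evu v_m u_m.
Qed.

Lemma card_arcs_le d : max_degree_le e d -> #|[set p : V * V | e p.1 p.2]| <= #|V| * d.
Proof.
move=> deg_le; rewrite -sum1dep_card -(pair_big_dep xpredT e (fun _ _ => 1)) /=.
rewrite -sum_nat_const; apply: leq_sum => v _.
by rewrite sum1dep_card; exact: deg_le.
Qed.

Lemma sum_card_internal_prefix_le d m : max_degree_le e d -> m <= #|V| ->
  (\sum_(pi in orderings V) #|internal_vertices e (Defs.prefix pi m)|) * #|V|
  <= d * m ^ 2 * #|orderings V|.
Proof.
move=> deg_le le_mn; set S := \sum_(pi in _) _; set n := #|V|.
have [le_n1 | lt1n] := leqP n 1.
  by rewrite /S big1 // => pi _; rewrite internal_vertices_trivial ?cards0.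
have S_le : S * (n * (n - 1)) <= n * d * (#|orderings V| * (m * (m - 1))).
  apply: leq_trans (_ : (\sum_(pi in orderings V)
      #|[set p : V * V | e p.1 p.2 && pair_in_prefix m pi p]|) * (n * (n - 1)) <= _).
    by rewrite leq_mul2r leq_sum ?orbT // => pi _; exact: card_internal_prefix_le.
  rewrite sum_card_pairs_in_prefix big_distrl /=.
  rewrite (eq_bigr (fun=> #|orderings V| * (m * (m - 1)))); last first.
    move=> p evu; apply: pair_prefix_count_eq le_mn _.
    by apply: contraTneq evu => ->; case: e_simple => _ ->.
  by rewrite sum_nat_cond_const leq_mul2r card_arcs_le ?orbT.
have mB1_le : n * (m - 1) <= m * (n - 1).
  by rewrite !mulnBr !muln1 mulnC leq_sub2l.
rewrite -(@leq_pmul2r (n - 1)) ?subn_gt0 // -mulnA.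
apply: leq_trans S_le _.
set O := #|orderings V|.
have -> : n * d * (O * (m * (m - 1))) = d * O * m * (n * (m - 1)) by ring.
have -> : d * m ^ 2 * O * (n - 1) = d * O * m * (m * (n - 1)) by ring.
by rewrite leq_mul2l mB1_le orbT.
Qed.

End InternalVertices.

Local Open Scope ring_scope.

Lemma expected_internal_le (R : realType) (V : finType) (e : rel V) (d m : nat) :
  simple_graph e -> max_degree_le e d -> (m <= #|V|)%N ->
  expected_internal R e m * #|V|%:R <= d%:R * m%:R ^+ 2.
Proof.
move=> e_simple deg_le le_mn; rewrite /expected_internal.
have [-> | O_gt0] := posnP #|orderings V|.
  by rewrite invr0 mulr0 mul0r mulr_ge0 ?exprn_ge0.
rewrite mulrAC ler_pdivrMr ?ltr0n // -natr_sum -natrX -!natrM ler_nat.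
exact: sum_card_internal_prefix_le.
Qed.

Lemma prefix_size_le (R : realType) (V : finType) (delta : R) :
  0 <= delta -> (prefix_size V delta)%:R <= delta * #|V|%:R.
Proof.
move=> delta_ge0; have floor_nneg : 0 <= Num.floor (delta * #|V|%:R).
  by rewrite floor_ge0 mulr_ge0.
by rewrite /prefix_size natr_absz ger0_norm // floor_le.
Qed.

Theorem lemma9 (R : realType) :
  exists C : R, 0 < C /\
  forall (V : finType) (e : rel V) (d : nat) (k delta : R),
    simple_graph e -> max_degree_le e d ->
    0 < k -> 0 < delta -> delta <= 1 ->
    delta <= k / d%:R ->
    expected_internal R e (prefix_size V delta)
      <= C * k * (prefix_size V delta)%:R.
Proof.
exists 1; split; first exact: ltr01.
move=> V e d k delta e_simple deg_le k_gt0 delta_gt0 delta_le1 delta_le.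
rewrite mul1r; set m := prefix_size V delta; set n := #|V|.
have m_le : m%:R <= delta * n%:R by apply: prefix_size_le; exact: ltW.
have le_mn : (m <= n)%N by rewrite -(ler_nat R) (le_trans m_le) ?ler_piMl.
have [n0 | n_gt0] := posnP n.
  rewrite /expected_internal big1 => [|pi _]; first by rewrite mul0r mulr_ge0 ?ler0n ?ltW.
  by rewrite internal_vertices_trivial ?cards0 // -/n n0.
have dm_le : d%:R * m%:R <= k * n%:R.
  have [-> | d_gt0] := posnP d; first by rewrite mul0r mulr_ge0 ?ler0n ?ltW.
  have delta_d : delta * d%:R <= k by rewrite -ler_pdivlMr ?ltr0n.
  apply: le_trans (_ : d%:R * (delta * n%:R) <= _); first by rewrite ler_wpM2l.
  by rewrite mulrA [d%:R * _]mulrC ler_wpM2r.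
rewrite -(ler_pM2r (_ : 0 < n%:R)) ?ltr0n //.
apply: le_trans (expected_internal_le R e_simple deg_le le_mn) _.
by rewrite expr2 mulrA [k * _ * _]mulrAC ler_wpM2r ?ler0n.
Qed.
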